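(* Let $C \subset \mathbb{R}^n$ be convex and closed with nonempty interior, and let $h\colon C\to\mathbb{R}$ be Legendre on $C$, continuous on $C$, and satisfy condition (B): for every sequence $(x_k)_{k\in\mathbb{N}} \subset \mathrm{int}\, C$ and every $y \in C$, if $x_k \to y$ then $D_h(y,x_k) \to 0$. Let $a \in \mathrm{bd}\, C$ be an extreme point of $C$ and let $y \in C$ with $y \neq a$. Then for any $\epsilon > 0$ and $K > 0$ there exists $c \in \mathrm{int}\, C$ such that $\|c - a\| \le \epsilon$ and $D_h(y,c) \ge K$.
   Context: A convex function $h \colon C \to \mathbb{R}$ on a convex set $C\subset\mathbb{R}^n$ with nonempty interior is called Legendre if (1) $h$ is continuously differentiable on $\mathrm{int}\, C$ and $\|\nabla h(x)\| \to +\infty$ whenever $x \in \mathrm{int}\, C$ approaches a point of the boundary of $C$; and (2) $h$ is strictly convex on $\mathrm{int}\, C$. The Bregman divergence is $D_h(y,x) = h(y) - h(x) - \langle \nabla h(x), y - x\rangle$ for $y \in C$, $x \in \mathrm{int}\, C$. $\mathrm{bd}\, C$ denotes the boundary of $C$. *)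

From HB Require Import structures.
From mathcomp Require Import all_boot all_order all_algebra.
From mathcomp Require Import all_classical all_reals all_analysis.
Set Implicit Arguments. Unset Strict Implicit. Unset Printing Implicit Defensive.
Import Order.TTheory GRing.Theory Num.Theory.
Import numFieldNormedType.Exports.
Local Open Scope classical_set_scope.
Local Open Scope ring_scope.

Section Defs.
Context {R : realType} {n : nat}.
Local Notation V := 'rV[R]_n.

Definition dotv (u v : V) : R := \sum_(i < n) u 0 i * v 0 i.
Definition enorm (u : V) : R := Num.sqrt (dotv u u).

Definition grad (h : V -> R) (x : V) : V :=
  \row_(i < n) ('d h x (delta_mx 0 i : V)).

Definition convexset (C : set V) : Prop :=
  forall x y t, C x -> C y -> 0 <= t <= 1 -> C (t *: x + (1 - t) *: y).

Definition convex_on (C : set V) (h : V -> R) : Prop :=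
  forall x y t, C x -> C y -> 0 <= t <= 1 ->
    h (t *: x + (1 - t) *: y) <= t * h x + (1 - t) * h y.

Definition strictly_convex_on (C : set V) (h : V -> R) : Prop :=
  forall x y t, C x -> C y -> x != y -> 0 < t < 1 ->
    h (t *: x + (1 - t) *: y) < t * h x + (1 - t) * h y.

Definition boundary (C : set V) : set V := closure C `\` interior C.

Definition legendre (C : set V) (h : V -> R) : Prop :=
  [/\ convex_on C h,
      (forall x, interior C x -> differentiable h x /\ grad h @ x --> grad h x),
      (forall b, boundary C b -> forall M : R, exists2 d : R, 0 < d &
          forall x, interior C x -> enorm (x - b) < d -> M <= enorm (grad h x))
    &
      strictly_convex_on (interior C) h].

Definition bregman (h : V -> R) (y x : V) : R :=
  h y - h x - dotv (grad h x) (y - x).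

Definition extreme_point (C : set V) (a : V) : Prop :=
  C a /\ forall x y t, C x -> C y -> 0 < t < 1 -> a = t *: x + (1 - t) *: y ->
    x = a /\ y = a.

End Defs.

From HB Require Import structures.
From mathcomp Require Import all_boot all_order all_algebra.
From mathcomp Require Import all_classical all_reals all_analysis.
From mathcomp Require Import ring lra.
Set Implicit Arguments. Unset Strict Implicit. Unset Printing Implicit Defensive.
Import Order.TTheory GRing.Theory Num.Theory.
Import numFieldNormedType.Exports.
Local Open Scope classical_set_scope.
Local Open Scope ring_scope.

(* Since a is extreme and y <> a, the point a + eta (a - y) lies outside the
   closed set C, hence so does c + eta (c - y) for interior points c close to a.
   The ray from y through such a c therefore leaves C at a boundary point
   b = c + sig (c - y) with 0 < sig <= eta, and the interior points x of the ray
   just before b have arbitrarily large gradients (Legendre condition (1b)).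
   As h is bounded above on a ball around c, and c lies between y and x, the
   gradient inequality at x makes <grad h x, x - y> grow with the norm of
   grad h x, and so does D_h(y, x). *)

Section Euclidean.
Context {R : realType} {n : nat}.
Local Notation V := 'rV[R]_n.
Implicit Types u v g : V.

Lemma dotvDr g u v : dotv g (u + v) = dotv g u + dotv g v.
Proof. by rewrite /dotv -big_split; apply: eq_bigr => i _; rewrite mxE mulrDr. Qed.

Lemma dotvZr g u (k : R) : dotv g (k *: u) = k * dotv g u.
Proof. by rewrite /dotv mulr_sumr; apply: eq_bigr => i _; rewrite mxE mulrCA. Qed.

Lemma dotvNr g u : dotv g (- u) = - dotv g u.
Proof. by rewrite -scaleN1r dotvZr mulN1r. Qed.

Lemma dotvBr g u v : dotv g (u - v) = dotv g u - dotv g v.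
Proof. by rewrite dotvDr dotvNr. Qed.

Lemma dotvv_ge0 u : 0 <= dotv u u.
Proof. by apply: sumr_ge0 => i _; rewrite -expr2 sqr_ge0. Qed.

Lemma enorm_sqr u : enorm u ^+ 2 = dotv u u.
Proof. by rewrite /enorm sqr_sqrtr // dotvv_ge0. Qed.

Lemma normr_entry_le u i : `|u 0 i| <= `|u|.
Proof.
have /mapP[j Hj ->] : `|u ord0 i| \in [seq `|u x.1 x.2| | x : 'I_1 * 'I_n].
  by apply/mapP; exists (ord0, i) => //=; rewrite mem_enum.
by rewrite [leRHS]/Num.norm /= mx_normrE; apply/bigmax_geP; right => /=; exists j.
Qed.

(* [`|u|] is the sup norm of the normed space of matrices, [enorm u] the
   Euclidean norm. *)
Lemma normr_le_enorm u : `|u| <= enorm u.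
Proof.
rewrite [leLHS]/Num.norm /= mx_normrE; apply/bigmax_leP; split; first exact: sqrtr_ge0.
move=> [i j] _ /=; rewrite (ord1 i) -(sqrtr_sqr (u 0 j)) /enorm ler_sqrt ?dotvv_ge0 //.
rewrite /dotv (bigD1 j) //= expr2 lerDl; apply: sumr_ge0 => k _.
by rewrite -expr2 sqr_ge0.
Qed.

Lemma enorm_le_sqrt_normr u : enorm u <= Num.sqrt n%:R * `|u|.
Proof.
rewrite -[`|u|]normr_id -sqrtr_sqr -sqrtrM // /enorm ler_sqrt ?mulr_ge0 ?sqr_ge0 //.
rewrite /dotv -[n in n%:R]card_ord -sumr_const mulr_suml; apply: ler_sum => i _.
by rewrite mul1r -expr2 -real_normK ?num_real // lerXn2r ?nnegrE // normr_entry_le.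
Qed.

Lemma enorm_lt_normr u r : `|u| < r / (Num.sqrt n%:R + 1) -> enorm u < r.
Proof.
have N0 : 0 < Num.sqrt n%:R + 1 :> R by rewrite ltr_wpDl.
move=> ur; apply: le_lt_trans (enorm_le_sqrt_normr u) _.
apply: (@le_lt_trans _ _ ((Num.sqrt n%:R + 1) * `|u|)).
  by rewrite ler_wpM2r // lerDl.
by rewrite mulrC -ltr_pdivlMr.
Qed.

Lemma dotv_grad (h : V -> R) x v : dotv (grad h x) v = 'd h x v.
Proof.
rewrite [in RHS](row_sum_delta v) linear_sum /dotv; apply: eq_bigr => i _.
by rewrite linearZ /= mxE mulrC.
Qed.

Lemma interiorP (A : set V) x :
  interior A x <-> exists2 e : R, 0 < e & forall z, `|x - z| < e -> A z.
Proof.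
rewrite /interior /= nbhs_ballP; split => -[e e0 He]; exists e => // z.
  by move=> Hz; apply: He; rewrite -ball_normE.
by rewrite -ball_normE => Hz; apply: He.
Qed.

End Euclidean.

Section ConvexSet.
Context {R : realType} {n : nat}.
Local Notation V := 'rV[R]_n.
Variable C : set V.
Hypotheses (convC : convexset C) (closedC : closed C).

Lemma interior_convex_comb p q t : interior C p -> C q -> 0 < t <= 1 ->
  interior C (t *: p + (1 - t) *: q).
Proof.
move=> /interiorP[e e0 He] Cq /andP[t0 t1]; apply/interiorP.
exists (t * e) => [|z Hz]; first exact: mulr_gt0.
have -> : z = t *: (p + t^-1 *: (z - (t *: p + (1 - t) *: q))) + (1 - t) *: q.
  rewrite scalerDr scalerA mulfV ?gt_eqF // scale1r.
  by rewrite addrCA opprD addNKr subrK.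
apply: convC => //; last by rewrite ltW.
apply: He; rewrite opprD addrA subrr add0r normrN normrZ gtr0_norm ?invr_gt0 //.
by rewrite -distrC mulrC ltr_pdivrMr // mulrC.
Qed.

Lemma interior_segment_near z a d : interior C z -> C a -> 0 < d ->
  exists2 t : R, 0 < t < 1 &
    interior C (t *: z + (1 - t) *: a) /\ `|t *: z + (1 - t) *: a - a| < d.
Proof.
move=> iz Ca d0; set k := `|z - a| + 1.
have k0 : 0 < k by rewrite ltr_wpDl.
pose t := Order.min 2^-1 (d / k).
have t0 : 0 < t by rewrite lt_min invr_gt0 ltr0n divr_gt0.
have t1 : t < 1 by rewrite gt_min invf_lt1 ?ltr0n ?ltr1n.
exists t; first by rewrite t0 t1.
split; first by apply: interior_convex_comb; rewrite // t0 ltW.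
have -> : t *: z + (1 - t) *: a - a = t *: (z - a).
  by apply/rowP => i; rewrite !mxE; ring.
rewrite normrZ gtr0_norm //; apply: (@le_lt_trans _ _ (d / k * `|z - a|)).
  by rewrite ler_wpM2r // ge_min lexx orbT.
by rewrite mulrAC ltr_pdivrMr // ltr_pM2l // ltrDl.
Qed.

Lemma extreme_point_beyond_near a y eta : extreme_point C a -> C y -> y != a -> 0 < eta ->
  exists2 d : R, 0 < d & forall c, `|c - a| < d -> ~ C (c + eta *: (c - y)).
Proof.
move=> [Ca ext] Cy ya eta0; set p := a + eta *: (a - y).
have nCp : ~ C p.
  move=> Cp; have e0 : 1 + eta != 0 by rewrite gt_eqF ?ltr_wpDl.
  have t01 : 0 < (1 + eta)^-1 < 1 by rewrite invr_gt0 invf_lt1 ltr_wpDl ?ltrDl.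
  have [|_ /eqP] := ext _ _ _ Cp Cy t01; last by rewrite (negbTE ya).
  by apply/rowP => i; rewrite !mxE; field.
have := closed_openC closedC; rewrite openE => /(_ p nCp) /interiorP[d d0 Hd].
exists (d / (1 + eta)) => [|c ca]; first by rewrite divr_gt0 ?ltr_wpDl.
apply: Hd; have -> : p - (c + eta *: (c - y)) = (1 + eta) *: (a - c).
  by apply/rowP => i; rewrite !mxE; ring.
by rewrite normrZ gtr0_norm ?ltr_wpDl // distrC -ltr_pdivlMl ?ltr_wpDl // mulrC.
Qed.

Lemma ray_mem_lt c v eta s : C c -> 0 < eta -> ~ C (c + eta *: v) ->
  0 <= s -> C (c + s *: v) -> s < eta.
Proof.
move=> Cc eta0 nCe s0 Cs; rewrite ltNge; apply/negP => es; apply: nCe.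
have sp : 0 < s := lt_le_trans eta0 es.
have -> : c + eta *: v = (eta / s) *: (c + s *: v) + (1 - eta / s) *: c.
  by apply/rowP => i; rewrite !mxE; field; rewrite gt_eqF.
apply: convC => //; apply/andP; split; first by rewrite divr_ge0 // ltW.
by rewrite ler_pdivrMr // mul1r.
Qed.

Lemma ray_exit c v eta : interior C c -> 0 < eta -> ~ C (c + eta *: v) ->
  exists sig : R,
    [/\ 0 < sig, sig <= eta, C (c + sig *: v) & ~ interior C (c + sig *: v)].
Proof.
move=> ic eta0 nCe; have Cc := interior_subset ic.
pose T := (fun s : R => c + s *: v) @^-1` C.
have T0 : T 0 by rewrite /T /= scale0r addr0.
have Tlt s : T s -> s < eta.
  have [s0 Ts|s0 _] := leP 0 s; first exact: ray_mem_lt s0 Ts.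
  exact: lt_trans eta0.
have hT : has_sup T by split; [exists 0 | exists eta => s /Tlt/ltW].
have closedT : closed T.
  apply: (continuous_closedP _).1 closedC => s.
  by apply: cvgD; [exact: cvg_cst | apply: cvgZl; exact: cvg_id].
set sig := sup T.
have Tsig : T sig by rewrite ((closure_id T).1 closedT); exact: closure_sup hT.1 hT.2.
have nib : ~ interior C (c + sig *: v).
  move=> /interiorP[r r0 Hr]; set k := r / (`|v| + 1).
  have k0 : 0 < k by rewrite divr_gt0 // ltr_wpDl.
  have : T (sig + k).
    apply: Hr; have -> : c + sig *: v - (c + (sig + k) *: v) = - (k *: v).
      by apply/rowP => i; rewrite !mxE; ring.
    by rewrite normrN normrZ gtr0_norm // mulrAC ltr_pdivrMr ?ltr_wpDl // ltr_pM2l // ltrDl.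
  by move/(sup_upper_bound hT); rewrite -/sig gerDl leNgt k0.
exists sig; split => //; last exact: ltW (Tlt _ Tsig).
rewrite lt_def (sup_upper_bound hT T0) andbT; apply/eqP => sig0; apply: nib.
by rewrite sig0 scale0r addr0.
Qed.

Lemma extreme_point_ray_exit a y e : interior C !=set0 -> extreme_point C a ->
  C y -> y != a -> 0 < e ->
  exists c sig, [/\ interior C c, 0 < sig, C (c + sig *: (c - y)),
    ~ interior C (c + sig *: (c - y)) &
    forall s, 0 <= s <= sig -> `|c + s *: (c - y) - a| < e].
Proof.
move=> [z iz] ext Cy ya e0; set k := 1 + `|a - y|; pose eta := e / 2 / k.
have k0 : 0 < k by rewrite ltr_pwDl.
have eta0 : 0 < eta by rewrite !divr_gt0.
have etak : eta * k = e / 2 by rewrite divfK ?gt_eqF.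
have [d d0 Hd] := extreme_point_beyond_near ext Cy ya eta0.
have d'0 : 0 < Order.min d (Order.min 1 (e / 2)) by rewrite !lt_min d0 ltr01 divr_gt0.
have [t _ [ic]] := interior_segment_near iz ext.1 d'0.
set c := t *: z + (1 - t) *: a in ic *; clearbody c; rewrite !lt_min => /and3P[cad ca1 cae].
have [sig [sig0 sige Cb nib]] := ray_exit ic eta0 (Hd c cad).
exists c, sig; split => // s /andP[s0 ssig].
have cyk : `|c - y| <= k.
  have -> : c - y = (c - a) + (a - y) by rewrite addrA subrK.
  apply: le_trans (ler_normD _ _) _; rewrite /k; lra.
have : s * `|c - y| <= eta * k := ler_pM s0 (normr_ge0 _) (le_trans ssig sige) cyk.
rewrite etak addrAC => sk; apply: le_lt_trans (ler_normD _ _) _.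
rewrite normrZ ger0_norm //; lra.
Qed.

End ConvexSet.

Section ConvexFunction.
Context {R : realType} {n : nat}.
Local Notation V := 'rV[R]_n.
Variables (C : set V) (h : V -> R).
Hypothesis convh : convex_on C h.

Lemma convex_on_grad_le x w : C x -> differentiable h x -> C w ->
  h x + dotv (grad h x) (w - x) <= h w.
Proof.
move=> Cx dx Cw; rewrite dotv_grad -deriveE // -lerBrDl.
have /cvg_ex[l Hl] := @diff_derivable _ _ _ h x (w - x) dx.
have Hl' : (fun t : R => t^-1 *: ((h \o shift x) (t *: (w - x)) - h x)) @ 0^'+ --> l.
  apply: cvg_trans Hl; apply: cvg_app => P [e /= e0 He].
  by exists e => // t /= Ht t0; apply: He => //; exact: lt0r_neq0.
rewrite /derive (cvg_lim _ Hl) //; apply: (cvgr_to_le Hl'); near=> t.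
have t0 : 0 < t by near: t; exact: nbhs_right_gt.
have t1 : t <= 1 by near: t; apply: nbhs_right_le; exact: ltr01.
rewrite /=; have -> : t *: (w - x) + x = t *: w + (1 - t) *: x.
  by rewrite scalerBr scalerBl scale1r -addrA [- _ + x]addrC.
have := @convh w x t Cw Cx; rewrite t1 ltW // => /(_ isT) H.
rewrite /= /GRing.scale /= ler_pdivrMl // mulrBr lerBlDr; apply: (le_trans H).
by rewrite mulrBl mul1r; lra.
Unshelve. all: by end_near.
Qed.

Lemma convex_on_ray_ge c v s eta : C c -> differentiable h c -> C (c + s *: v) ->
  0 <= s <= eta -> h c - eta * `|dotv (grad h c) v| <= h (c + s *: v).
Proof.
move=> Cc dc Cs /andP[s0 se]; apply: le_trans (convex_on_grad_le Cc dc Cs).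
rewrite addrAC subrr add0r dotvZr lerD2l; set P := dotv (grad h c) v.
have P0 : 0 <= `|P| by [].
have PP : - `|P| <= P by rewrite lerNl -normrN ler_norm.
nra.
Qed.

Lemma bregman_ray_ge c y s rho B L K : 0 < s -> 0 < rho ->
  C (c + s *: (c - y)) -> differentiable h (c + s *: (c - y)) ->
  (forall z, `|c - z| <= rho -> C z /\ h z <= B) -> L <= h (c + s *: (c - y)) ->
  B - L < rho * enorm (grad h (c + s *: (c - y))) ->
  K - h y + B <= rho * enorm (grad h (c + s *: (c - y))) ->
  K <= bregman h y (c + s *: (c - y)).
Proof.
move=> s0 rho0; set v := c - y; set x := c + s *: v; set g := grad h x.
set G := enorm g => Cx dx ball_c Lx GL GK.
have G0 : 0 <= G := sqrtr_ge0 _.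
pose u := G^-1 *: g.
have gu : dotv g u = G.
  rewrite dotvZr -enorm_sqr -/G; have [->|G_neq0] := eqVneq G 0; first by rewrite invr0 mul0r.
  by rewrite expr2 mulKf.
have nu : `|u| <= 1.
  rewrite normrZ ger0_norm ?invr_ge0 //.
  apply: le_trans (ler_wpM2l _ (normr_le_enorm g)) _; first by rewrite invr_ge0.
  by have [->|G_neq0] := eqVneq G 0; [rewrite invr0 mul0r | rewrite mulVf].
have [Cw hw] : C (c + rho *: u) /\ h (c + rho *: u) <= B.
  apply: ball_c; rewrite opprD addrA subrr add0r normrN normrZ gtr0_norm //.
  by rewrite -[leRHS]mulr1 ler_wpM2l // ltW.
(* Gradient inequality at x towards [c + rho *: u], where h <= B:
   [rho * G - s * dotv g v <= B - h x]. *)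
clearbody u; have := convex_on_grad_le Cx dx Cw.
have -> : c + rho *: u - x = rho *: u - s *: v by rewrite /x opprD addrACA subrr add0r.
rewrite -/g dotvBr !dotvZr gu => grad_ineq.
have -> : bregman h y x = h y - h x + (1 + s) * dotv g v.
  rewrite /bregman -/g; have -> : y - x = - ((1 + s) *: v).
    by apply/rowP => i; rewrite !mxE; ring.
  by rewrite dotvNr dotvZr opprK.
have gv0 : 0 < dotv g v by rewrite -(pmulr_rgt0 _ s0); lra.
rewrite mulrDl mul1r; lra.
Qed.

Lemma locally_bounded_above c : interior C c -> differentiable h c ->
  exists2 rho : R, 0 < rho & forall z, `|c - z| <= rho -> C z /\ h z <= h c + 1.
Proof.
move=> ic /differentiable_continuous hc.
have : \forall z \near c, C z /\ h z < h c + 1.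
  near=> z; split; first by near: z.
  by near: z; apply: (cvgr_lt (h c) hc); rewrite ltrDl.
move=> /nbhs_ballP[r r0 Hr]; exists (r / 2) => [|z zr]; first by rewrite divr_gt0.
have r2 : r / 2 < r by rewrite ltr_pdivrMr // ltr_pMr // ltr1n.
have /Hr[Cz hz] : ball c r z by rewrite -ball_normE /=; exact: le_lt_trans zr r2.
by split => //; exact: ltW.
Unshelve. all: by end_near.
Qed.

Lemma bregman_ray_unbounded c y eta K : interior C c -> differentiable h c ->
  exists M : R, forall s, 0 < s <= eta ->
    C (c + s *: (c - y)) -> differentiable h (c + s *: (c - y)) ->
    M <= enorm (grad h (c + s *: (c - y))) -> K <= bregman h y (c + s *: (c - y)).
Proof.
move=> ic dc; have [rho rho0 ball_c] := locally_bounded_above ic dc.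
set L := h c - eta * `|dotv (grad h c) (c - y)|; set B := h c + 1.
exists ((Order.max (B - L) (K - h y + B) + 1) / rho) => s /andP[s0 se] Cx dx HM.
have : Order.max (B - L) (K - h y + B) < rho * enorm (grad h (c + s *: (c - y))).
  apply: lt_le_trans (ler_wpM2l (ltW rho0) HM).
  by rewrite mulrC divfK ?gt_eqF // ltrDl.
rewrite gt_max => /andP[BL KB].
apply: (bregman_ray_ge s0 rho0 Cx dx ball_c _ BL (ltW KB)).
by apply: convex_on_ray_ge (interior_subset ic) dc Cx _; rewrite (ltW s0) se.
Qed.

End ConvexFunction.

Theorem lemma2 (R : realType) (n : nat) (C : set 'rV[R]_n) (h : 'rV[R]_n -> R)
  (hCconv : convexset C) (hCclosed : closed C) (hCint : interior C !=set0)
  (hleg : legendre C h) (hcont : {within C, continuous h})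
  (hB : forall (x : nat -> 'rV[R]_n) (y : 'rV[R]_n),
      (forall k, interior C (x k)) -> C y -> x @ \oo --> y ->
      (fun k => bregman h y (x k)) @ \oo --> (0 : R))
  (a y : 'rV[R]_n) (ha_bd : boundary C a) (ha_ext : extreme_point C a)
  (hy : C y) (hya : y != a) :
  forall eps K : R, 0 < eps -> 0 < K ->
    exists c, [/\ interior C c, enorm (c - a) <= eps & K <= bregman h y c].
Proof.
move=> eps K eps0 _; case: hleg => convh diffh blowup _.
have N0 : 0 < Num.sqrt n%:R + 1 :> R by rewrite ltr_wpDl.
have [c [sig [ic sig0 Cb nib near_a]]] :=
  extreme_point_ray_exit hCconv hCclosed hCint ha_ext hy hya (divr_gt0 eps0 N0).
set b := c + sig *: (c - y) in Cb nib.
have [M HM] := bregman_ray_unbounded convh y sig K ic (diffh c ic).1.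
have [d d0 Hd] := blowup b (conj (subset_closure Cb) nib) M.
have [t /andP[t0 t1] [ix xb]] := interior_segment_near hCconv ic Cb (divr_gt0 d0 N0).
have xE : t *: c + (1 - t) *: b = c + ((1 - t) * sig) *: (c - y).
  by rewrite /b; apply/rowP => i; rewrite !mxE; ring.
rewrite xE in ix xb.
have s0 : 0 < (1 - t) * sig by rewrite mulr_gt0 // subr_gt0.
have ssig : (1 - t) * sig <= sig.
  by apply: ler_piMl; [exact: ltW | rewrite lerBlDr lerDl; exact: ltW].
exists (c + ((1 - t) * sig) *: (c - y)); split => //.
  apply/ltW/enorm_lt_normr/near_a; rewrite ssig andbT; exact: ltW.
apply: HM (interior_subset ix) (diffh _ ix).1 (Hd _ ix (enorm_lt_normr xb)).
by rewrite s0 ssig.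
Qed.
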